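(* Let $m\ge1$ and let $u$ be an $m$-labeled unranked tree with $|u|=p$ edges. The generating function $\mathbf C^{\mathcal T}_{m,p}(z)=\sum_{n\ge0} c_n z^n$, where $c_n$ is the number of $m$-labeled unranked trees with $n$ edges that contain $u$ as a subtree, is $$\mathbf C^{\mathcal T}_{m,p}(z)=\frac{z^{p+1}+\sqrt{1-4mz+2z^{p+1}+z^{2p+2}}-\sqrt{1-4mz}}{2z}.$$
   Context: An $m$-labeled unranked tree is a non-empty finite rooted tree whose nodes carry labels from $\{1,\dots,m\}$ and in which the children of every node are linearly ordered (any finite number of children). Its size is its number of edges. A tree $t$ contains $u$ as a subtree if for some node $v$ of $t$ the subtree rooted at $v$ (consisting of $v$ and all its descendants) equals $u$. *)

From Stdlib Require Import Reals List.
From Coquelicot Require Import Coquelicot.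
Import ListNotations.

Inductive tree : Type := Node : nat -> list tree -> tree.

(* Size = number of edges: each child contributes its own size plus the edge to it. *)
Fixpoint tsize (t : tree) : nat :=
  match t with
  | Node _ ts =>
      (fix fsize (f : list tree) : nat :=
         match f with
         | [] => 0%nat
         | t' :: f' => (S (tsize t') + fsize f')%nat
         end) ts
  end.

Inductive labeled (m : nat) : tree -> Prop :=
  | labeled_node : forall l ts,
      (1 <= l <= m)%nat -> (forall t, In t ts -> labeled m t) -> labeled m (Node l ts).

Inductive subtree (u : tree) : tree -> Prop :=
  | sub_here : subtree u u
  | sub_child : forall l ts t, In t ts -> subtree u t -> subtree u (Node l ts).

Definition is_count (P : tree -> Prop) (k : nat) : Prop :=
  exists s : list tree, NoDup s /\ (forall t, In t s <-> P t) /\ length s = k.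

(* Trees all of whose nodes pass a hereditary test are counted through forests:
   a nonempty forest is a tree followed by a forest, so the generating functions
   satisfy F = 1 + z T F.  For all m-labeled trees T = m F; for the trees avoiding
   u, T = m F - z^p, because a node whose children avoid u contains u only if it is
   u itself.  Each relation is a quadratic equation for F, whose root analytic at 0
   is singled out by the coefficient bound F_k <= 2 (4m)^k; the trees containing u
   are counted by the difference of the two tree series. *)

From Stdlib Require Import Reals List Lia Lra Permutation ClassicalEpsilon.
From Coquelicot Require Import Coquelicot.
Import ListNotations.
Local Open Scope nat_scope.

Fixpoint forest_size (f : list tree) : nat :=
  match f with [] => 0 | t :: f' => S (tsize t) + forest_size f' end.

Lemma tsize_Node l f : tsize (Node l f) = forest_size f.
Proof. induction f; simpl in *; auto. Qed.

Lemma In_tsize_lt t f : In t f -> tsize t < forest_size f.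
Proof.
  induction f as [|t' f IH]; simpl; [intros []|].
  intros [<-|H]; [lia|]. apply IH in H. lia.
Qed.

Lemma subtree_tsize_le u t : subtree u t -> tsize u <= tsize t.
Proof.
  induction 1 as [|l f t Ht _ IH]; auto. rewrite tsize_Node. apply In_tsize_lt in Ht. lia.
Qed.

Lemma NoDup_flat_map_proj {A B} (pi : B -> A) (h : A -> list B) (g : list A) :
  NoDup g -> (forall a, In a g -> NoDup (h a)) ->
  (forall a b, In a g -> In b (h a) -> pi b = a) -> NoDup (flat_map h g).
Proof.
  induction g as [|a g IH]; intros Hg Hh Hp; simpl; [constructor|].
  inversion Hg; subst. apply NoDup_app.
  - apply Hh; simpl; auto.
  - apply IH; auto; intros; [apply Hh|apply Hp]; simpl; auto.
  - intros b Hb Hb'. apply in_flat_map in Hb'. destruct Hb' as [a' [Ha' Hb']].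
    assert (pi b = a) by (apply Hp; simpl; auto).
    assert (pi b = a') by (apply Hp; simpl; auto). congruence.
Qed.

Lemma flat_map_ext_in {A B} (f g : A -> list B) l :
  (forall x, In x l -> f x = g x) -> flat_map f l = flat_map g l.
Proof. induction l; simpl; intros H; auto. rewrite H, IHl; auto. Qed.

Lemma length_eq_of_same_elements {A} (l1 l2 : list A) :
  NoDup l1 -> NoDup l2 -> (forall x, In x l1 <-> In x l2) -> length l1 = length l2.
Proof. intros H1 H2 H. apply Permutation_length, NoDup_Permutation; auto. Qed.

Lemma list_sum_map_const {A} (l : list A) c : list_sum (map (fun _ => c) l) = length l * c.
Proof. induction l; simpl; auto. Qed.

Section Forests.

Variables (m : nat) (ok : tree -> bool).

Inductive ok_tree : tree -> Prop :=
  | ok_Node l f : 1 <= l <= m -> ok (Node l f) = true ->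
      (forall t, In t f -> ok_tree t) -> ok_tree (Node l f).

Definition nodes_over (fs : list (list tree)) : list tree :=
  flat_map (fun l => map (Node l) fs) (seq 1 m).

Definition trees_over (fs : list (list tree)) : list tree := filter ok (nodes_over fs).

(* A forest of size [k+1] is a tree of size [j] followed by a forest of size [k-j];
   any fuel exceeding [k] yields the same list. *)
Fixpoint forests_fuel (fuel k : nat) : list (list tree) :=
  match fuel, k with
  | 0, _ => []
  | S _, 0 => [[]]
  | S fuel, S k =>
      flat_map (fun j => flat_map (fun t => map (cons t) (forests_fuel fuel (k - j)))
                         (trees_over (forests_fuel fuel j)))
        (seq 0 (S k))
  end.

Definition forests (k : nat) : list (list tree) := forests_fuel (S k) k.

Definition trees (k : nat) : list tree := trees_over (forests k).

Lemma in_nodes_over fs t : In t (nodes_over fs) <->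
  exists l f, 1 <= l <= m /\ In f fs /\ t = Node l f.
Proof.
  unfold nodes_over. rewrite in_flat_map. split.
  - intros [l [Hl H]]. apply in_map_iff in H as [f [<- Hf]]. apply in_seq in Hl.
    exists l, f. repeat split; auto; lia.
  - intros [l [f [Hl [Hf ->]]]]. exists l. split; [apply in_seq; lia|]. apply in_map; auto.
Qed.

Lemma NoDup_nodes_over fs : NoDup fs -> NoDup (nodes_over fs).
Proof.
  intros H. apply NoDup_flat_map_proj with (pi := fun t => match t with Node l _ => l end).
  - apply seq_NoDup.
  - intros l _. apply NoDup_map_NoDup_ForallPairs; auto. intros x y _ _ E. injection E; auto.
  - intros l b _ Hb. apply in_map_iff in Hb as [f [<- _]]. reflexivity.
Qed.

Lemma length_nodes_over fs : length (nodes_over fs) = m * length fs.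
Proof.
  unfold nodes_over. rewrite length_flat_map.
  erewrite map_ext, list_sum_map_const, length_seq; [reflexivity|].
  intros l. apply length_map.
Qed.

Lemma in_trees_over fs t : In t (trees_over fs) <->
  exists l f, 1 <= l <= m /\ In f fs /\ ok (Node l f) = true /\ t = Node l f.
Proof.
  unfold trees_over. rewrite filter_In, in_nodes_over. split.
  - intros [[l [f [Hl [Hf ->]]]] Hok]. exists l, f. auto.
  - intros [l [f [Hl [Hf [Hok ->]]]]]. split; auto. exists l, f. auto.
Qed.

Lemma NoDup_trees_over fs : NoDup fs -> NoDup (trees_over fs).
Proof. intros H. apply NoDup_filter, NoDup_nodes_over, H. Qed.

Lemma forests_fuel_size fuel k s : In s (forests_fuel fuel k) -> forest_size s = k.
Proof.
  revert k s; induction fuel as [|fuel IH]; intros [|k] s H; cbn [forests_fuel] in H;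
    try contradiction; [destruct H as [<-|[]]; reflexivity|].
  apply in_flat_map in H. destruct H as [j [Hj H]]. apply in_seq in Hj.
  apply in_flat_map in H. destruct H as [t [Ht H]]. apply in_map_iff in H.
  destruct H as [r [<- Hr]]. apply in_trees_over in Ht.
  destruct Ht as [l [f [_ [Hf [_ ->]]]]].
  apply IH in Hr. apply IH in Hf. cbn [forest_size]. rewrite tsize_Node. lia.
Qed.

Lemma in_forests_fuel fuel k s : k < fuel ->
  In s (forests_fuel fuel k) <-> List.Forall ok_tree s /\ forest_size s = k.
Proof.
  revert k s; induction fuel as [|fuel IH]; intros k s Hk; [lia|].
  destruct k as [|k]; cbn [forests_fuel].
  - split; [intros [<-|[]]; auto|].
    intros [_ H]. destruct s as [|t s]; [left; auto|]. simpl in H. lia.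
  - rewrite in_flat_map. split.
    + intros [j [Hj H]]. apply in_seq in Hj.
      apply in_flat_map in H. destruct H as [t [Ht H]]. apply in_map_iff in H.
      destruct H as [r [<- Hr]]. apply in_trees_over in Ht.
      destruct Ht as [l [f [Hl [Hf [Hok ->]]]]].
      apply IH in Hr as [Hr1 Hr2]; [|lia]. apply IH in Hf as [Hf1 Hf2]; [|lia].
      rewrite Forall_forall in Hf1. split.
      * constructor; auto. constructor; auto.
      * cbn [forest_size]. rewrite tsize_Node. lia.
    + intros [Hs Hk']. destruct s as [|t r]; [simpl in Hk'; lia|].
      inversion Hs as [|? ? Ht Hr]; subst. inversion Ht as [l f Hl Hok Hf]; subst.
      cbn [forest_size] in Hk'. rewrite tsize_Node in Hk'.
      exists (forest_size f). split; [apply in_seq; lia|].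
      apply in_flat_map. exists (Node l f). split.
      * apply in_trees_over. exists l, f. split; [auto|]. split; [|auto].
        apply IH; [lia|]. split; auto. apply Forall_forall; auto.
      * apply in_map, IH; [lia|]. split; auto. lia.
Qed.

Lemma NoDup_forests_fuel fuel k : NoDup (forests_fuel fuel k).
Proof.
  revert k; induction fuel as [|fuel IH]; intros [|k]; cbn [forests_fuel];
    try constructor; [intros []|constructor|].
  (* Distinct [j] give distinct first trees, distinct first trees give distinct forests. *)
  apply NoDup_flat_map_proj with
    (pi := fun s => match s with t :: _ => tsize t | [] => 0 end).
  - apply seq_NoDup.
  - intros j _. apply NoDup_flat_map_proj with
      (pi := fun s => match s with t :: _ => t | [] => Node 0 [] end).
    + apply NoDup_trees_over, IH.
    + intros t _. apply NoDup_map_NoDup_ForallPairs; auto.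
      intros x y _ _ E. injection E; auto.
    + intros t b _ Hb. apply in_map_iff in Hb. destruct Hb as [r [<- _]]. auto.
  - intros j b _ Hb. apply in_flat_map in Hb. destruct Hb as [t [Ht Hb]].
    apply in_map_iff in Hb. destruct Hb as [r [<- _]].
    apply in_trees_over in Ht. destruct Ht as [l [f [_ [Hf [_ ->]]]]].
    rewrite tsize_Node. eapply forests_fuel_size; eauto.
Qed.

Lemma forests_fuel_irrel fuel fuel' k : k < fuel -> k < fuel' ->
  forests_fuel fuel k = forests_fuel fuel' k.
Proof.
  revert fuel' k; induction fuel as [|fuel IH]; intros [|fuel'] k H1 H2; try lia.
  destruct k as [|k]; cbn [forests_fuel]; auto.
  apply flat_map_ext_in. intros j Hj. apply in_seq in Hj.
  rewrite (IH fuel' j) by lia. apply flat_map_ext_in. intros t _.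
  rewrite (IH fuel' (k - j)) by lia. reflexivity.
Qed.

Lemma in_forests k s : In s (forests k) <-> List.Forall ok_tree s /\ forest_size s = k.
Proof. apply in_forests_fuel. lia. Qed.

Lemma NoDup_forests k : NoDup (forests k).
Proof. apply NoDup_forests_fuel. Qed.

Lemma NoDup_trees k : NoDup (trees k).
Proof. apply NoDup_trees_over, NoDup_forests. Qed.

Lemma in_trees k t : In t (trees k) <-> ok_tree t /\ tsize t = k.
Proof.
  unfold trees. rewrite in_trees_over. split.
  - intros [l [f [Hl [Hf [Hok ->]]]]]. apply in_forests in Hf as [Hf Hk].
    rewrite Forall_forall in Hf. rewrite tsize_Node. split; auto. constructor; auto.
  - intros [Ht Hk]. inversion Ht as [l f Hl Hok Hf]; subst. exists l, f.
    split; [auto|]. split; [|auto]. apply in_forests. rewrite tsize_Node. split; auto.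
    apply Forall_forall; auto.
Qed.

Lemma length_forests_S k : length (forests (S k)) =
  list_sum (map (fun j => length (trees j) * length (forests (k - j))) (seq 0 (S k))).
Proof.
  unfold forests at 1.
  change (forests_fuel (S (S k)) (S k)) with (flat_map (fun j =>
    flat_map (fun t => map (cons t) (forests_fuel (S k) (k - j)))
      (trees_over (forests_fuel (S k) j))) (seq 0 (S k))).
  rewrite length_flat_map. f_equal.
  apply map_ext_in. intros j Hj. apply in_seq in Hj. rewrite length_flat_map.
  unfold trees, forests. rewrite (forests_fuel_irrel (S k) (S j) j) by lia.
  erewrite map_ext, list_sum_map_const; [reflexivity|].
  intros t. rewrite length_map. apply f_equal, forests_fuel_irrel; lia.
Qed.

End Forests.

Definition decb (P : Prop) : bool := if excluded_middle_informative P then true else false.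

Lemma decb_true P : decb P = true <-> P.
Proof. unfold decb. destruct (excluded_middle_informative P); split; auto; discriminate. Qed.

Definition all_ok (_ : tree) : bool := true.

Definition avoid_ok (u t : tree) : bool := negb (decb (subtree u t)).

Lemma avoid_ok_true u t : avoid_ok u t = true <-> ~ subtree u t.
Proof.
  unfold avoid_ok, decb. destruct (excluded_middle_informative (subtree u t)); simpl.
  - split; [discriminate|contradiction].
  - tauto.
Qed.

Lemma ok_tree_all m t : ok_tree m all_ok t <-> labeled m t.
Proof. split; induction 1; constructor; auto. Qed.

Lemma ok_tree_avoid m u t : ok_tree m (avoid_ok u) t <-> labeled m t /\ ~ subtree u t.
Proof.
  split.
  - induction 1 as [l f Hl Hok Hf IH]. apply avoid_ok_true in Hok.
    split; auto. constructor; auto. intros t Ht. apply IH; auto.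
  - intros [Ht Hs]. revert Hs. induction Ht as [l f Hl Hf IH]; intros Hs.
    constructor; auto.
    + apply avoid_ok_true; auto.
    + intros t Ht. apply IH; auto. intros Hs'. apply Hs. econstructor; eauto.
Qed.

Lemma not_subtree_child l f t : In t f -> ~ subtree (Node l f) t.
Proof.
  intros Ht Hs. apply subtree_tsize_le in Hs. apply In_tsize_lt in Ht.
  rewrite tsize_Node in Hs. lia.
Qed.

Lemma subtree_Node_avoiding u l f : (forall t, In t f -> ~ subtree u t) ->
  subtree u (Node l f) <-> Node l f = u.
Proof.
  intros Hf. split; [|intros <-; constructor].
  intros Hs. inversion Hs as [|? ? t Ht Hs']; [reflexivity|]. exfalso. eapply Hf; eauto.
Qed.

Lemma length_trees_all m k : length (trees m all_ok k) = m * length (forests m all_ok k).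
Proof.
  unfold trees, trees_over, all_ok. rewrite List.filter_true. apply length_nodes_over.
Qed.

Lemma count_trees_containing m u n c :
  is_count (fun t => labeled m t /\ tsize t = n /\ subtree u t) c ->
  c + length (trees m (avoid_ok u) n) = length (trees m all_ok n).
Proof.
  intros [s [Hs [Hin <-]]].
  rewrite <- (filter_length (fun t => decb (subtree u t)) (trees m all_ok n)).
  f_equal; apply length_eq_of_same_elements; auto using NoDup_filter, NoDup_trees.
  - intros x. rewrite Hin, filter_In, decb_true, in_trees, ok_tree_all. tauto.
  - intros x. rewrite filter_In, !in_trees, ok_tree_all, ok_tree_avoid.
    fold (avoid_ok u x). rewrite avoid_ok_true. tauto.
Qed.

(* A tree whose children avoid [u] contains [u] only if it is [u] itself. *)
Lemma count_trees_avoiding m u n : labeled m u ->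
  length (trees m (avoid_ok u) n) + (if n =? tsize u then 1 else 0) =
  m * length (forests m (avoid_ok u) n).
Proof.
  intros Hu. rewrite <- length_nodes_over. unfold trees, trees_over.
  set (L := nodes_over m (forests m (avoid_ok u) n)).
  rewrite <- (filter_length (avoid_ok u) L). f_equal.
  assert (HL : forall x, In x (filter (fun x => negb (avoid_ok u x)) L) <->
                         x = u /\ tsize u = n).
  { intros x. unfold L. unfold avoid_ok at 1. rewrite filter_In, Bool.negb_involutive,
      decb_true, in_nodes_over. split.
    - intros [[l [f [Hl [Hf ->]]]] Hs]. apply in_forests in Hf as [Hf Hn].
      rewrite Forall_forall in Hf.
      apply subtree_Node_avoiding in Hs; [|intros t Ht; apply (ok_tree_avoid m), Hf, Ht].
      rewrite <- Hs, tsize_Node. auto.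
    - intros [-> Hn]. split; [|constructor]. destruct Hu as [l f Hl Hf].
      exists l, f. split; [auto|]. split; [|reflexivity].
      apply in_forests. rewrite tsize_Node in Hn. split; [|auto].
      apply Forall_forall. intros t Ht. apply ok_tree_avoid.
      split; auto. apply not_subtree_child, Ht. }
  destruct (Nat.eqb_spec n (tsize u)) as [Hn|Hn].
  - change 1 with (length [u]). apply length_eq_of_same_elements.
    + repeat constructor. intros [].
    + apply NoDup_filter, NoDup_nodes_over, NoDup_forests.
    + intros x. rewrite HL. simpl. intuition.
  - destruct (filter _ L) as [|x l] eqn:E; [reflexivity|].
    exfalso. apply Hn. symmetry. apply (HL x). left. reflexivity.
Qed.

Local Open Scope R_scope.

Lemma sum_f_R0_S (a : nat -> R) N :
  sum_f_R0 a (S N) = a 0%nat + sum_f_R0 (fun i => a (S i)) N.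
Proof. rewrite (decomp_sum a (S N)) by lia. reflexivity. Qed.

Lemma sum_convolution_le N (a b : nat -> R) : (forall k, 0 <= a k) -> (forall k, 0 <= b k) ->
  sum_f_R0 (fun k => sum_f_R0 (fun j => a j * b (k - j)%nat) k) N <=
  sum_f_R0 a N * sum_f_R0 b N.
Proof.
  revert a; induction N as [|N IH]; intros a Ha Hb; [simpl; lra|].
  rewrite sum_f_R0_S. simpl (sum_f_R0 _ 0).
  rewrite (sum_eq (fun i => sum_f_R0 (fun j => a j * b (S i - j)%nat) (S i))
                  (fun i => a 0%nat * b (S i) + sum_f_R0 (fun j => a (S j) * b (i - j)%nat) i))
    by (intros i _; apply sum_f_R0_S).
  rewrite plus_sum.
  assert (Ea : sum_f_R0 (fun i => a 0%nat * b (S i)) N =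
               a 0%nat * sum_f_R0 (fun i => b (S i)) N).
  { rewrite scal_sum. apply sum_eq. intros; ring. }
  specialize (IH (fun j => a (S j)) (fun k => Ha (S k)) Hb). cbv beta in IH.
  assert (Hb_mono : sum_f_R0 b N <= b 0%nat + sum_f_R0 (fun i => b (S i)) N).
  { rewrite <- sum_f_R0_S, tech5. pose proof (Hb (S N)). lra. }
  pose proof (cond_pos_sum _ N (fun k => Ha (S k))) as HaS.
  pose proof (Rmult_le_compat_l _ _ _ HaS Hb_mono).
  pose proof (Rmult_le_pos _ _ HaS (Hb 0%nat)).
  rewrite Ea, (sum_f_R0_S a N), (sum_f_R0_S b N). lra.
Qed.

(* By induction, with [s N] the partial sums: [s (N+1) <= g 0 + (s N)^2 / 4 <= 1 + 1]. *)
Lemma partial_sums_le_2 (g : nat -> R) : (forall k, 0 <= g k) -> g 0%nat <= 1 ->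
  (forall k, g (S k) <= / 4 * sum_f_R0 (fun j => g j * g (k - j)%nat) k) ->
  forall N, sum_f_R0 g N <= 2.
Proof.
  intros Hg H0 Hrec N. induction N as [|N IH]; [simpl; lra|].
  rewrite sum_f_R0_S.
  assert (sum_f_R0 (fun i => g (S i)) N <=
          / 4 * sum_f_R0 (fun k => sum_f_R0 (fun j => g j * g (k - j)%nat) k) N).
  { rewrite scal_sum. apply sum_Rle. intros n _. rewrite Rmult_comm. apply Hrec. }
  pose proof (sum_convolution_le N g g Hg Hg).
  pose proof (cond_pos_sum g N Hg). nra.
Qed.

Lemma is_series_geom_scal q c : 0 <= q < 1 -> is_series (fun k => c * q ^ k) (c / (1 - q)).
Proof.
  intros Hq. apply (is_series_scal_l c (fun k => q ^ k)), is_series_geom.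
  rewrite Rabs_pos_eq; lra.
Qed.

Lemma ex_series_Rabs_geom_bound (a : nat -> R) c q : 0 <= q < 1 ->
  (forall k, Rabs (a k) <= c * q ^ k) -> ex_series (fun k => Rabs (a k)).
Proof.
  intros Hq Ha. apply (@ex_series_le _ R_CompleteNormedModule _ (fun k => c * q ^ k)).
  - intros k. change (Rabs (Rabs (a k)) <= c * q ^ k). rewrite Rabs_Rabsolu. apply Ha.
  - eexists. apply is_series_geom_scal, Hq.
Qed.

Section ForestSeries.

Variables (M : R) (G t : nat -> R).
Hypotheses (M_pos : 0 < M) (G_0 : G 0%nat = 1) (G_nonneg : forall k, 0 <= G k)
  (t_bound : forall k, 0 <= t k <= M * G k)
  (G_S : forall k, G (S k) = sum_f_R0 (fun j => t j * G (k - j)%nat) k).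

Lemma G_geom_bound k : G k * (/ (4 * M)) ^ k <= 2.
Proof.
  set (x := / (4 * M)).
  assert (Hx : 0 < x) by (apply Rinv_0_lt_compat; lra).
  set (g := fun k => G k * x ^ k).
  assert (Hg : forall k, 0 <= g k) by (intros n; apply Rmult_le_pos, pow_le; auto; lra).
  assert (Hrec : forall k, g (S k) <= / 4 * sum_f_R0 (fun j => g j * g (k - j)%nat) k).
  { intros n. unfold g. rewrite G_S, (Rmult_comm (sum_f_R0 _ n)), !scal_sum.
    apply sum_Rle. intros j Hj.
    (* Since [x M = 1/4], the bound [t j <= M G j] gives [x t j <= G j / 4]. *)
    replace (x ^ S n) with (x * (x ^ j * x ^ (n - j))).
    2:{ rewrite <- pow_add. replace (j + (n - j))%nat with n by lia. reflexivity. }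
    pose proof (t_bound j). pose proof (G_nonneg (n - j)).
    pose proof (pow_le x j (Rlt_le _ _ Hx)). pose proof (pow_le x (n - j) (Rlt_le _ _ Hx)).
    assert (HxM : x * M = / 4) by (unfold x; field; lra).
    replace (G j * x ^ j * (G (n - j)%nat * x ^ (n - j)) * / 4) with
      (x * (M * G j) * x ^ j * (G (n - j)%nat * x ^ (n - j))) by (rewrite <- HxM; ring).
    replace (t j * G (n - j)%nat * (x * (x ^ j * x ^ (n - j)))) with
      (x * t j * x ^ j * (G (n - j)%nat * x ^ (n - j))) by ring.
    apply Rmult_le_compat_r; [apply Rmult_le_pos; auto|].
    apply Rmult_le_compat_r; auto. apply Rmult_le_compat_l; lra. }
  pose proof (partial_sums_le_2 g Hg ltac:(unfold g; rewrite G_0; simpl; lra) Hrec k) as Hsum.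
  change (g k <= 2). destruct k as [|k]; [exact Hsum|].
  rewrite tech5 in Hsum. pose proof (cond_pos_sum g k Hg). lra.
Qed.

Lemma G_term_abs_le k z : Rabs (G k * z ^ k) <= 2 * (4 * M * Rabs z) ^ k.
Proof.
  rewrite Rabs_mult, <- RPow_abs, Rabs_pos_eq by auto.
  replace (Rabs z ^ k) with ((/ (4 * M)) ^ k * (4 * M * Rabs z) ^ k)
    by (rewrite <- Rpow_mult_distr; f_equal; field; lra).
  rewrite <- Rmult_assoc. apply Rmult_le_compat_r; [apply pow_le; pose proof (Rabs_pos z); nra|].
  apply G_geom_bound.
Qed.

Lemma t_term_abs_le k z : Rabs (t k * z ^ k) <= 2 * M * (4 * M * Rabs z) ^ k.
Proof.
  destruct (t_bound k) as [Ht0 Ht1].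
  apply Rle_trans with (M * Rabs (G k * z ^ k)).
  - rewrite !Rabs_mult, (Rabs_pos_eq (t k) Ht0), (Rabs_pos_eq (G k) (G_nonneg k)).
    rewrite <- Rmult_assoc. apply Rmult_le_compat_r; [apply Rabs_pos|exact Ht1].
  - replace (2 * M * (4 * M * Rabs z) ^ k) with (M * (2 * (4 * M * Rabs z) ^ k)) by ring.
    apply Rmult_le_compat_l; [lra|apply G_term_abs_le].
Qed.

Lemma forest_series z : 4 * M * Rabs z < 1 ->
  exists g tau : R,
    is_series (fun k => G k * z ^ k) g /\ is_series (fun k => t k * z ^ k) tau /\
    g = 1 + z * tau * g /\ Rabs g <= 2 / (1 - 4 * M * Rabs z).
Proof.
  intros Hz. set (q := 4 * M * Rabs z).
  assert (Hq : 0 <= q < 1) by (unfold q; split; [|lra]; pose proof (Rabs_pos z); nra).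
  pose proof (ex_series_Rabs_geom_bound _ _ _ Hq (fun k => G_term_abs_le k z)) as EG.
  pose proof (ex_series_Rabs_geom_bound _ _ _ Hq (fun k => t_term_abs_le k z)) as Et.
  pose proof (Series_correct _ (ex_series_Rabs _ EG)) as SG.
  pose proof (Series_correct _ (ex_series_Rabs _ Et)) as St.
  set (g := Series (fun k => G k * z ^ k)) in *.
  set (tau := Series (fun k => t k * z ^ k)) in *.
  exists g, tau. split; [exact SG|]. split; [exact St|]. split.
  - (* The Cauchy product of the [t]- and [G]-series is the shifted [G]-series. *)
    assert (Sprod : is_series (fun n => G (S n) * z ^ n) (tau * g)).
    { eapply is_series_ext; [|exact (is_series_mult _ _ _ _ St SG Et EG)].
      intros n. simpl. rewrite G_S, Rmult_comm, scal_sum. apply sum_eq. intros j Hj.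
      replace (z ^ n) with (z ^ j * z ^ (n - j)) by (rewrite <- pow_add; f_equal; lia). ring. }
    assert (Sshift : is_series (fun k => G (S k) * z ^ (S k)) (g - 1)).
    { apply (is_series_incr_1 (fun k => G k * z ^ k)). rewrite G_0.
      replace g with (g - 1 + 1 * 1) in SG at 1 by ring. exact SG. }
    assert (Sscal : is_series (fun k => G (S k) * z ^ (S k)) (z * (tau * g))).
    { eapply is_series_ext; [|exact (is_series_scal_l z _ _ Sprod)].
      intros n. simpl. unfold scal; simpl. unfold mult; simpl. ring. }
    pose proof (is_series_unique _ _ Sshift). pose proof (is_series_unique _ _ Sscal). lra.
  - eapply Rle_trans; [apply Series_Rabs, EG|].
    rewrite <- (is_series_unique _ _ (is_series_geom_scal q 2 Hq)).
    apply Series_le; [|eexists; apply is_series_geom_scal, Hq].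
    intros n. split; [apply Rabs_pos|apply G_term_abs_le].
Qed.

End ForestSeries.

(* The discriminant is the square of [b - 2 a x], which the bound makes positive. *)
Lemma quadratic_root_small a b c x : a <> 0 -> a * x ^ 2 - b * x + c = 0 ->
  2 * Rabs a * Rabs x < b -> x = (b - sqrt (b ^ 2 - 4 * a * c)) / (2 * a).
Proof.
  intros Ha Hq Hb.
  assert (D : b ^ 2 - 4 * a * c = (b - 2 * a * x) ^ 2).
  { replace c with (b * x - a * x ^ 2) by lra. ring. }
  assert (2 * a * x <= 2 * Rabs a * Rabs x).
  { rewrite !Rmult_assoc, <- Rabs_mult. pose proof (Rle_abs (a * x)). lra. }
  rewrite D, sqrt_pow2 by lra. field. exact Ha.
Qed.

Lemma is_series_indicator (p : nat) (x : R) : is_series (fun k => if k =? p then x else 0) x.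
Proof.
  assert (Hsum : forall n, (p <= n)%nat ->
    sum_f_R0 (fun k => if k =? p then x else 0) n = x).
  { intros n Hn. induction Hn as [|n Hn IH].
    - destruct p as [|p]; [simpl; ring|].
      rewrite tech5. cbv beta. rewrite Nat.eqb_refl, sum_eq_R0; [ring|].
      intros k Hk. destruct (Nat.eqb_spec k (S p)); [lia|reflexivity].
    - rewrite tech5, IH. destruct (Nat.eqb_spec (S n) p); [lia|ring]. }
  change (is_lim_seq (sum_n (fun k => if k =? p then x else 0)) x).
  apply is_lim_seq_ext_loc with (u := fun _ => x); [|apply is_lim_seq_const].
  exists p. intros n Hn. rewrite sum_n_Reals. symmetry. apply Hsum. exact Hn.
Qed.

(* [e = 0] counts all trees, [e = 1] the trees avoiding a fixed tree of size [p]. *)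
Lemma tree_series_closed_form (M e : R) (p : nat) (G t : nat -> R) :
  1 <= M -> 0 <= e <= 1 -> G 0%nat = 1 -> (forall k, 0 <= G k) -> (forall k, 0 <= t k) ->
  (forall k, t k = M * G k - (if k =? p then e else 0)) ->
  (forall k, G (S k) = sum_f_R0 (fun j => t j * G (k - j)%nat) k) ->
  forall z, 0 < Rabs z < / (16 * M) ->
  is_series (fun k => t k * z ^ k)
    ((1 - e * z ^ (p + 1) - sqrt ((1 + e * z ^ (p + 1)) ^ 2 - 4 * M * z)) / (2 * z)).
Proof.
  intros HM He G_0 HG Ht t_def G_S z [Hz0 Hz].
  assert (HMz : M * Rabs z < / 16).
  { apply (Rmult_lt_compat_l M) in Hz; [|lra].
    replace (M * / (16 * M)) with (/ 16) in Hz by (field; lra). exact Hz. }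
  assert (Hz1 : Rabs z <= M * Rabs z) by (pose proof (Rabs_pos z); nra).
  assert (Hzn : z <> 0) by (intros ->; rewrite Rabs_R0 in Hz0; lra).
  assert (t_bound : forall k, 0 <= t k <= M * G k).
  { intros k. split; [auto|]. rewrite t_def. destruct (k =? p); lra. }
  destruct (forest_series M G t ltac:(lra) G_0 HG t_bound G_S z ltac:(lra))
    as [g [tau [Sg [St [Eg Bg]]]]].
  assert (Htau : tau = M * g - e * z ^ p).
  { rewrite <- (is_series_unique _ _ St). apply is_series_unique.
    eapply is_series_ext;
      [|exact (is_series_minus _ _ _ _ (is_series_scal_l M _ _ Sg)
                                       (is_series_indicator p (e * z ^ p)))].
    intros n. unfold scal, plus, opp; simpl; unfold mult; simpl. rewrite t_def.
    destruct (Nat.eqb_spec n p); [subst|]; ring. }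
  assert (Hg : Rabs g <= 8 / 3).
  { apply (Rle_trans _ _ _ Bg). apply (Rmult_le_reg_r (1 - 4 * M * Rabs z)); [lra|].
    unfold Rdiv. rewrite Rmult_assoc, Rinv_l by lra. lra. }
  assert (Hzp : z ^ (p + 1) = z ^ p * z) by (rewrite pow_add; simpl; ring).
  assert (Hw : Rabs (z ^ (p + 1)) <= Rabs z).
  { rewrite Hzp, Rabs_mult, <- RPow_abs.
    pose proof (pow_incr (Rabs z) 1 p ltac:(pose proof (Rabs_pos z); lra)).
    rewrite pow1 in *. pose proof (Rabs_pos z). nra. }
  assert (Hroot : g = ((1 + e * z ^ (p + 1)) -
            sqrt ((1 + e * z ^ (p + 1)) ^ 2 - 4 * (M * z) * 1)) / (2 * (M * z))).
  { apply quadratic_root_small.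
    - apply Rmult_integral_contrapositive. split; lra.
    - rewrite Htau in Eg. rewrite Hzp. nra.
    - rewrite Rabs_mult, (Rabs_pos_eq M) by lra.
      pose proof (Rabs_pos g). pose proof (Rabs_pos z).
      pose proof (Rle_abs (- z ^ (p + 1))). rewrite Rabs_Ropp in *. nra. }
  replace (4 * (M * z) * 1) with (4 * M * z) in Hroot by ring.
  set (s := sqrt _) in *.
  replace ((1 - e * z ^ (p + 1) - s) / (2 * z)) with tau; [exact St|].
  rewrite Htau, Hroot, Hzp. field. split; lra.
Qed.

Definition forest_count m ok k : R := INR (length (forests m ok k)).

Definition tree_count m ok k : R := INR (length (trees m ok k)).

Lemma INR_list_sum_seq (f : nat -> nat) k :
  INR (list_sum (map f (seq 0 (S k)))) = sum_f_R0 (fun j => INR (f j)) k.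
Proof.
  induction k as [|k IH]; [simpl; rewrite Nat.add_0_r; reflexivity|].
  rewrite seq_S, map_app, list_sum_app, plus_INR, IH. simpl. rewrite Nat.add_0_r. reflexivity.
Qed.

Lemma forest_count_S m ok k : forest_count m ok (S k) =
  sum_f_R0 (fun j => tree_count m ok j * forest_count m ok (k - j)) k.
Proof.
  unfold forest_count. rewrite length_forests_S, INR_list_sum_seq.
  apply sum_eq. intros j _. apply mult_INR.
Qed.

Lemma tree_count_all m k : tree_count m all_ok k = INR m * forest_count m all_ok k.
Proof. unfold tree_count, forest_count. rewrite length_trees_all. apply mult_INR. Qed.

Lemma tree_count_avoid m u k : labeled m u ->
  tree_count m (avoid_ok u) k =
  INR m * forest_count m (avoid_ok u) k - (if k =? tsize u then 1 else 0).
Proof.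
  intros Hu. unfold tree_count, forest_count.
  rewrite <- mult_INR, <- (count_trees_avoiding m u k Hu), plus_INR.
  destruct (k =? tsize u); simpl; ring.
Qed.

Lemma tree_count_containing m u n c :
  is_count (fun t => labeled m t /\ tsize t = n /\ subtree u t) c ->
  INR c = tree_count m all_ok n - tree_count m (avoid_ok u) n.
Proof.
  intros Hc. unfold tree_count. rewrite <- (count_trees_containing m u n c Hc), plus_INR. ring.
Qed.

Theorem lemma10 (m : nat) (u : tree) (c : nat -> nat) :
  (1 <= m)%nat ->
  labeled m u ->
  (forall n : nat,
      is_count (fun t => labeled m t /\ tsize t = n /\ subtree u t) (c n)) ->
  exists r : R, 0 < r /\
    forall z : R, 0 < Rabs z < r ->
      is_series (fun n => INR (c n) * z ^ n)
        ((z ^ (tsize u + 1)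
          + sqrt (1 - 4 * INR m * z + 2 * z ^ (tsize u + 1) + z ^ (2 * tsize u + 2))
          - sqrt (1 - 4 * INR m * z)) / (2 * z)).
Proof.
  intros Hm Hu Hc.
  assert (HM : 1 <= INR m) by (apply (le_INR 1); exact Hm).
  assert (Tall : forall k, tree_count m all_ok k =
    INR m * forest_count m all_ok k - (if k =? tsize u then 0 else 0)).
  { intros k. rewrite tree_count_all. destruct (k =? tsize u); ring. }
  pose proof (tree_series_closed_form (INR m) 0 (tsize u)
    (forest_count m all_ok) (tree_count m all_ok) HM ltac:(lra) eq_refl
    (fun _ => pos_INR _) (fun _ => pos_INR _) Tall
    (forest_count_S m all_ok)) as Sall.
  pose proof (tree_series_closed_form (INR m) 1 (tsize u)
    (forest_count m (avoid_ok u)) (tree_count m (avoid_ok u)) HM ltac:(lra) eq_refl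
    (fun _ => pos_INR _) (fun _ => pos_INR _) (fun k => tree_count_avoid m u k Hu)
    (forest_count_S m (avoid_ok u))) as Savoid.
  exists (/ (16 * INR m)). split; [apply Rinv_0_lt_compat; lra|].
  intros z Hz.
  assert (Hzn : z <> 0) by (intros ->; rewrite Rabs_R0 in Hz; lra).
  set (w := z ^ (tsize u + 1)) in *.
  replace (z ^ (2 * tsize u + 2)) with (w ^ 2)
    by (unfold w; rewrite <- pow_mult; f_equal; lia).
  replace ((w + sqrt (1 - 4 * INR m * z + 2 * w + w ^ 2) - sqrt (1 - 4 * INR m * z)) / (2 * z))
    with ((1 - 0 * w - sqrt ((1 + 0 * w) ^ 2 - 4 * INR m * z)) / (2 * z) -
          (1 - 1 * w - sqrt ((1 + 1 * w) ^ 2 - 4 * INR m * z)) / (2 * z)).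
  2:{ replace ((1 + 0 * w) ^ 2 - 4 * INR m * z) with (1 - 4 * INR m * z) by ring.
      replace ((1 + 1 * w) ^ 2 - 4 * INR m * z) with (1 - 4 * INR m * z + 2 * w + w ^ 2) by ring.
      field. exact Hzn. }
  eapply is_series_ext; [|exact (is_series_minus _ _ _ _ (Sall z Hz) (Savoid z Hz))].
  intros n. unfold plus, opp; simpl. rewrite (tree_count_containing m u n (c n) (Hc n)). ring.
Qed.
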